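(* Let $r\le n-1$ and let $P=P(m_1,\dots,m_{n-1})$ be a natural unit interval order with $m_1=\cdots=m_{r-1}=r$ and $m_r=\cdots=m_{n-1}=n$, and let $G=\mathrm{inc}(P)$. Then $$X_G(\mathbf{x},t)=\sum_{\ell=0}^{\min\{n-r,r-1\}}t^\ell\,[n-r]_t!\,[r-1]_t!\,[n-2\ell]_t\,e_{(n-\ell,\ell)}.$$
   Context: A natural unit interval order $P(m_1,\dots,m_{n-1})$ is defined for integers $m_1\le\cdots\le m_{n-1}\le n$ with $m_i\ge i$: it is the poset on $[n]$ with $i<_P j$ iff $i<n$ and $j\in\{m_i+1,\dots,n\}$. Its incomparability graph has vertex set $[n]$ and an edge $\{i,j\}$ ($i<j$) iff $j\le m_i$. The chromatic quasisymmetric function of a graph $G$ on $V\subset\mathbb{P}$ is $X_G(\mathbf{x},t)=\sum_\kappa t^{\mathrm{asc}(\kappa)}\prod_v x_{\kappa(v)}$ over proper colorings $\kappa:V\to\mathbb{P}$, with $\mathrm{asc}(\kappa)$ the number of edges $\{i,j\}$, $i<j$, with $\kappa(i)<\kappa(j)$. $[m]_t=1+t+\cdots+t^{m-1}$, $[m]_t!=[1]_t\cdots[m]_t$, $[0]_t!=1$; $e_{(n,0)}=e_n$ and $e_\lambda$ denotes elementary symmetric functions. *)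

From HB Require Import structures.
From mathcomp Require Import all_boot all_order all_algebra.
From mathcomp Require Import mpoly.
Set Implicit Arguments. Unset Strict Implicit. Unset Printing Implicit Defensive.
Import Order.TTheory GRing.Theory.
Local Open Scope ring_scope.

Definition tpoly := {poly int}.

Definition qint (m : nat) : tpoly := \sum_(i < m) 'X^i.
Definition qfact (m : nat) : tpoly := \prod_(1 <= i < m.+1) qint i.

(* Incomparability graph of the natural unit interval order P(m_1,...,m_{n-1})
   on [n] = {1,...,n}.  Vertices are encoded as i : 'I_n standing for i+1;
   m is given 1-indexed (m k = m_k).  For vertices a < b (as integers),
   {a,b} is an edge iff b <= m_a. *)
Definition nuio_edge (n : nat) (m : nat -> nat) (i j : 'I_n) : bool :=
  (i < j)%N && (j.+1 <= m i.+1)%N.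

(* proper colorings of a graph given by an "upward" edge relation e (e i j only
   for i < j), with colors in 'I_N (i.e. colors 1..N) *)
Definition proper (n N : nat) (e : 'I_n -> 'I_n -> bool)
  (k : {ffun 'I_n -> 'I_N}) : bool :=
  [forall i, forall j, e i j ==> (k i != k j)].

Definition asc (n N : nat) (e : 'I_n -> 'I_n -> bool)
  (k : {ffun 'I_n -> 'I_N}) : nat :=
  #|[set p : 'I_n * 'I_n | e p.1 p.2 && (k p.1 < k p.2)%N]|.

(* The chromatic quasisymmetric function X_G(x,t) truncated to the variables
   x_1,...,x_N (i.e. x_i = 0 for i > N); a formal power series is determined by
   all these truncations. *)
Definition chromQS (n N : nat) (e : 'I_n -> 'I_n -> bool) : {mpoly tpoly[N]} :=
  \sum_(k : {ffun 'I_n -> 'I_N} | proper e k)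
     ('X^(asc e k) : tpoly)%:MP * \prod_(v : 'I_n) 'X_(k v).

Definition e2 (N a b : nat) : {mpoly tpoly[N]} := mesym N tpoly a * mesym N tpoly b.

Definition m_cor (n r : nat) (i : nat) : nat := if (i < r)%N then r else n.

From Pilot Require Import Defs.
From HB Require Import structures.
From mathcomp Require Import all_boot all_order all_algebra.
From mathcomp Require Import mpoly.
From mathcomp Require Import zify ring.
Import GRing.Theory.
Local Open Scope ring_scope.

(* The incomparability graph of P(r,...,r,n,...,n) consists of the cliques
   {1,...,r} and {r,...,n}, glued at the vertex r.  A proper colouring is thus
   an injective colouring of each clique, the two agreeing at r.  Summing t^asc
   over the injective colourings of a clique with a given colour set S gives
   [|S|]_t! times the monomial of S.  Hence, with a = r-1, b = n-r and c the
   colour of r,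
     X_G = [a]_t! [b]_t! F(a,b),    F(a,b) = \sum_c x_c L_a(c) R_b(c),
   where L_a(c) (resp. R_b(c)) sums over the a-sets (b-sets) of colours other
   than c, each colour below (above) c carrying a factor t.  Sliding the cut
   point c across all colours telescopes to
     (t - 1) (F(a,b+1) - F(a+1,b)) = (t^(a+1) - t^(b+1)) e_(a+1) e_(b+1),
   and this recursion determines F(a,b) by induction on min(a,b). *)

Set Implicit Arguments. Unset Strict Implicit. Unset Printing Implicit Defensive.

Section PointedSubsets.
Variables (R : nmodType) (T : finType).

Lemma big_setU1_mem (x : T) (Q : pred {set T}) (F : {set T} -> R) :
  \sum_(S : {set T} | (x \in S) && Q S) F S =
  \sum_(S : {set T} | (x \notin S) && Q (x |: S)) F (x |: S).
Proof.
rewrite (reindex_onto (fun S : {set T} => x |: S) (fun S => S :\ x)) /=; last first.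
  by move=> S /andP[xS _]; rewrite setD1K.
apply: eq_bigl => S; rewrite setU11 /=.
have [xS | xNS] /= := boolP (x \in S); last by rewrite setU1K ?eqxx ?andbT.
by rewrite andbC; case: eqP => // SE; move: xS; rewrite -SE setD11.
Qed.

Lemma sum_pointed_subsets (P : {set T}) m (F : T -> {set T} -> R) :
  \sum_(c in P) \sum_(S : {set T} | (S \subset P :\ c) && (#|S| == m)) F c S =
  \sum_(A : {set T} | (A \subset P) && (#|A| == m.+1)) \sum_(c in A) F c (A :\ c).
Proof.
rewrite [RHS](exchange_big_dep (mem P)) /=; last first.
  by move=> A c /andP[/subsetP AP _] /AP.
apply: eq_bigr => c cP; rewrite [RHS](eq_bigl _ _ (fun A => andbC _ _)).
rewrite big_setU1_mem; apply: eq_big => S; last first.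
  by case/andP=> /subsetD1P[_ cNS] _; rewrite setU1K.
rewrite subsetD1 subUset sub1set cP cardsU1.
by case: (c \in S); rewrite /= ?andbF ?andbT ?add1n ?eqSS.
Qed.

End PointedSubsets.

Lemma sum_expr_rank (R : pzSemiRingType) (x : R) N (S : {set 'I_N}) :
  \sum_(c in S) x ^+ #|[set y in S | (y < c)%N]| = \sum_(i < #|S|) x ^+ i.
Proof.
set rk := fun c : 'I_N => #|[set y in S | (y < c)%N]|.
have rk_lt (c d : 'I_N) : c \in S -> (c < d)%N -> (rk c < rk d)%N.
  move=> cS cd; apply: proper_card; apply/properP; split.
    by apply/subsetP => y; rewrite !inE => /andP[-> /ltn_trans ->].
  by exists c; rewrite !inE ?cS ?cd ?ltnn.
have rk_inj : {in S &, injective rk}.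
  move=> c d cS dS; case: (ltngtP c d) => [cd | dc | /val_inj //] Erk.
    by have := rk_lt c d cS cd; rewrite Erk ltnn.
  by have := rk_lt d c dS dc; rewrite Erk ltnn.
have rk_bound c : c \in S -> (rk c < #|S|)%N.
  move=> cS; apply: proper_card; apply/properP; split.
    by apply/subsetP => y; rewrite inE => /andP[].
  by exists c; rewrite ?inE ?ltnn ?andbF.
have uniq_rk : uniq [seq rk c | c in S].
  by rewrite map_inj_in_uniq ?enum_uniq // => c d; rewrite !mem_enum; apply: rk_inj.
rewrite -(big_image _ _ rk) -(big_mkord xpredT (fun i => x ^+ i)).
apply: perm_big; apply: uniq_perm; rewrite ?iota_uniq //.
apply: (uniq_min_size uniq_rk _ _).2; last by rewrite size_iota subn0 size_map -cardE.
by move=> i /mapP[c]; rewrite mem_enum => cS ->; rewrite mem_iota subn0 rk_bound.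
Qed.

Section FfunRcons.
Variables (T : finType) (m : nat).

Definition ffun_rcons (k : {ffun 'I_m -> T}) (c : T) : {ffun 'I_m.+1 -> T} :=
  [ffun i => if unlift ord_max i is Some j then k j else c].

Lemma ffun_rcons_widen k c j : ffun_rcons k c (widen_ord (leqnSn m) j) = k j.
Proof.
have -> : widen_ord (leqnSn m) j = lift ord_max j by apply/val_inj/esym/lift_max.
by rewrite ffunE liftK.
Qed.

Lemma ffun_rcons_max k c : ffun_rcons k c ord_max = c.
Proof. by rewrite ffunE unlift_none. Qed.

Lemma big_ffun_rcons (R : Type) (idx : R) (op : Monoid.com_law idx)
    (P : pred {ffun 'I_m.+1 -> T}) (F : {ffun 'I_m.+1 -> T} -> R) :
  \big[op/idx]_(k | P k) F k =
  \big[op/idx]_(k : {ffun 'I_m -> T})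
     \big[op/idx]_(c | P (ffun_rcons k c)) F (ffun_rcons k c).
Proof.
rewrite pair_big_dep (reindex (fun kc => ffun_rcons kc.1 kc.2)) //=.
exists (fun k => ([ffun j => k (widen_ord (leqnSn m) j)], k ord_max)).
  move=> [k c] _; rewrite ffun_rcons_max; congr (_, _).
  by apply/ffunP => j; rewrite ffunE ffun_rcons_widen.
move=> k _; apply/ffunP => i; rewrite ffunE.
case: (unliftP ord_max i) => [j -> | -> //]; rewrite ffunE.
by congr (k _); apply/val_inj/esym/lift_max.
Qed.

End FfunRcons.

Section FfunCat.
Variables (T : finType) (p q : nat).

Definition ffun_cat (k1 : {ffun 'I_p -> T}) (k2 : {ffun 'I_q -> T}) :
    {ffun 'I_(p + q) -> T} :=
  [ffun i => match split i with inl i1 => k1 i1 | inr i2 => k2 i2 end].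

Lemma ffun_cat_lshift k1 k2 i : ffun_cat k1 k2 (lshift q i) = k1 i.
Proof. by rewrite ffunE (unsplitK (inl _ i)). Qed.

Lemma ffun_cat_rshift k1 k2 j : ffun_cat k1 k2 (rshift p j) = k2 j.
Proof. by rewrite ffunE (unsplitK (inr _ j)). Qed.

Lemma big_ffun_cat (R : Type) (idx : R) (op : Monoid.com_law idx)
    (P : pred {ffun 'I_(p + q) -> T}) (F : {ffun 'I_(p + q) -> T} -> R) :
  \big[op/idx]_(k | P k) F k =
  \big[op/idx]_(k1 : {ffun 'I_p -> T})
     \big[op/idx]_(k2 | P (ffun_cat k1 k2)) F (ffun_cat k1 k2).
Proof.
rewrite pair_big_dep (reindex (fun k12 => ffun_cat k12.1 k12.2)) //=.
exists (fun k => ([ffun i => k (lshift q i)], [ffun j => k (rshift p j)])).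
  by move=> [k1 k2] _; congr (_, _); apply/ffunP => i;
     rewrite ffunE ?ffun_cat_lshift ?ffun_cat_rshift.
move=> k _; apply/ffunP => i; rewrite ffunE.
by case: splitP => j /= ij; rewrite ffunE; congr (k _); apply: val_inj.
Qed.

End FfunCat.

Section CompleteGraphColorings.
Variable N : nat.

Definition npairs n (e : rel 'I_n) (rc : rel 'I_N) (k : {ffun 'I_n -> 'I_N}) : nat :=
  \sum_(i < n) \sum_(j < n) (e i j && rc (k i) (k j)).

Lemma asc_npairs n (e : rel 'I_n) (k : {ffun 'I_n -> 'I_N}) :
  asc e k = npairs e (fun u v => (u < v)%N) k.
Proof.
rewrite /asc /npairs -sum1_card pair_bigA big_mkcond /=.
by apply: eq_bigr => -[i j] _; rewrite inE; case: (_ && _).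
Qed.

Lemma proper_npairs n (e : rel 'I_n) (k : {ffun 'I_n -> 'I_N}) :
  Defs.proper e k = (npairs e (fun u v => u == v) k == 0)%N.
Proof.
rewrite /Defs.proper /npairs sum_nat_eq0; apply: eq_forallb => i.
by rewrite sum_nat_eq0; apply: eq_forallb => j; case: (e i j); case: (k i == k j).
Qed.

Definition complete_edge m : rel 'I_m := fun i j => (i < j)%N.

Definition colors m (k : {ffun 'I_m -> 'I_N}) : {set 'I_N} := [set k i | i in 'I_m].

Lemma notin_colors m (k : {ffun 'I_m -> 'I_N}) c :
  (c \notin colors k) = (\sum_(i < m) (k i == c) == 0)%N.
Proof.
rewrite sum_nat_eq0; apply/idP/forallP => /= [cNk i | kNc]; rewrite ?eqb0.
  by apply: contra cNk => /eqP <-; apply: imset_f.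
by apply/imsetP => -[i _ ci]; have := kNc i; rewrite ci eqxx.
Qed.

Lemma colors_rcons m (k : {ffun 'I_m -> 'I_N}) c :
  colors (ffun_rcons k c) = c |: colors k.
Proof.
apply/setP => y; rewrite !inE.
apply/imsetP/orP => [[i _ ->] | [/eqP -> | /imsetP[j _ ->]]].
- case: (unliftP ord_max i) => [j -> | ->]; last by left; rewrite ffun_rcons_max.
  by right; rewrite ffunE liftK; apply: imset_f.
- by exists ord_max; rewrite ?ffun_rcons_max.
- by exists (lift ord_max j); rewrite // ffunE liftK.
Qed.

Lemma npairs_complete_rcons m (rc : rel 'I_N) (k : {ffun 'I_m -> 'I_N}) c :
  npairs (@complete_edge m.+1) rc (ffun_rcons k c) =
  (npairs (@complete_edge m) rc k + \sum_(i < m) rc (k i) c)%N.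
Proof.
rewrite /npairs big_ord_recr /= [X in (_ + X)%N]big1 ?addn0; last first.
  by move=> j _; rewrite /complete_edge ltnNge leq_ord.
rewrite -big_split; apply: eq_bigr => i _ /=.
rewrite big_ord_recr /= !ffun_rcons_widen ffun_rcons_max {2}/complete_edge /= ltn_ord.
by congr (_ + _)%N; apply: eq_bigr => j _; rewrite ffun_rcons_widen.
Qed.

Lemma proper_complete_rcons m (k : {ffun 'I_m -> 'I_N}) c :
  Defs.proper (@complete_edge m.+1) (ffun_rcons k c) =
  Defs.proper (@complete_edge m) k && (c \notin colors k).
Proof. by rewrite !proper_npairs npairs_complete_rcons addn_eq0 notin_colors. Qed.

Lemma asc_complete_rcons m (k : {ffun 'I_m -> 'I_N}) c :
  asc (@complete_edge m.+1) (ffun_rcons k c) =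
  (asc (@complete_edge m) k + \sum_(i < m) (k i < c))%N.
Proof. by rewrite !asc_npairs npairs_complete_rcons. Qed.

End CompleteGraphColorings.

Section CompleteGraphSum.
Variables (R : comPzSemiRingType) (t : R) (N : nat).

Definition qnum m : R := \sum_(i < m) t ^+ i.
Definition qfac m : R := \prod_(1 <= i < m.+1) qnum i.

Lemma qfacS m : qfac m.+1 = qfac m * qnum m.+1.
Proof. by rewrite /qfac big_nat_recr. Qed.

Definition chrom_complete m (P : {set 'I_N}) (w : 'I_N -> R) : R :=
  \sum_(k : {ffun 'I_m -> 'I_N} |
          Defs.proper (@complete_edge m) k && (colors k \subset P))
     t ^+ asc (@complete_edge m) k * \prod_(i < m) w (k i).

Lemma sum_chrom_complete_last m (P : {set 'I_N}) (w G : 'I_N -> R) :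
  \sum_(k : {ffun 'I_m.+1 -> 'I_N} |
          Defs.proper (@complete_edge m.+1) k && (colors k \subset P))
     t ^+ asc (@complete_edge m.+1) k * \prod_(i < m.+1) w (k i) * G (k ord_max)
  = \sum_(c in P) w c * G c * chrom_complete m (P :\ c) (fun y => t ^+ (y < c)%N * w y).
Proof.
under [RHS]eq_bigr => c _ do rewrite mulr_sumr.
rewrite big_ffun_rcons [RHS](exchange_big_dep xpredT) //=; apply: eq_bigr => k _.
apply: eq_big => [c | c _].
  rewrite proper_complete_rcons colors_rcons subUset sub1set subsetD1.
  by case: (c \in P); rewrite ?andbF //= -andbA (andbC (c \notin _)).
rewrite big_ord_recr /= !ffun_rcons_max; under eq_bigr do rewrite ffun_rcons_widen.
by rewrite asc_complete_rcons exprD big_split /= prodrXr; ring.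
Qed.

(* Peel off the last vertex: summing over which colour of an (m+1)-set it takes
   produces the factor [m+1]_t through the ranks of the colours. *)
Lemma chrom_completeE m (P : {set 'I_N}) (w : 'I_N -> R) :
  chrom_complete m P w =
  qfac m * \sum_(S : {set 'I_N} | (S \subset P) && (#|S| == m)) \prod_(y in S) w y.
Proof.
elim: m P w => [|m IH] P w.
  have colors0 (k : {ffun 'I_0 -> 'I_N}) : colors k = set0.
    by apply/setP => y; rewrite inE; apply/imsetP => -[[]].
  rewrite /qfac big_geq // mul1r (big_pred1 set0) ?big_set0; last first.
    by move=> S; rewrite cards_eq0 andb_idl // => /eqP ->; apply: sub0set.
  rewrite /chrom_complete (eq_big xpredT (fun _ => 1)) => [|k|k _].
  - by rewrite sumr_const card_ffun (card_ord 0).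
  - by rewrite proper_npairs /npairs big_ord0 colors0 sub0set.
  - by rewrite asc_npairs /npairs !big_ord0 expr0 mulr1.
have prod_wt c (S : {set 'I_N}) : \prod_(y in S) (t ^+ (y < c)%N * w y) =
    t ^+ #|[set y in S | (y < c)%N]| * \prod_(y in S) w y.
  rewrite big_split /= prodrXr; congr (t ^+ _ * _).
  rewrite -sum1_card big_mkcond [RHS]big_mkcond /=; apply: eq_bigr => y _.
  by rewrite inE; case: (y \in S); case: (y < c)%N.
rewrite /chrom_complete; under eq_bigr do rewrite -[t ^+ _ * _]mulr1.
rewrite (sum_chrom_complete_last m P w (fun _ => 1)).
under eq_bigr => c _ do rewrite mulr1 IH mulrCA.
under eq_bigr => c _ do under eq_bigr => S _ do rewrite prod_wt.
rewrite -mulr_sumr qfacS -mulrA; congr (_ * _).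
under eq_bigr => c _ do rewrite mulr_sumr.
rewrite sum_pointed_subsets mulr_sumr; apply: eq_bigr => A /andP[_ /eqP <-].
rewrite /qnum -sum_expr_rank mulr_suml; apply: eq_bigr => c cA.
rewrite (big_setD1 c cA) /= mulrCA; congr (t ^+ _ * _).
by apply: eq_card => y; rewrite !inE; case: eqP => // ->; rewrite ltnn !andbF.
Qed.

End CompleteGraphSum.

Section Telescoping.
Variables (R : comPzRingType) (t : R) (N : nat) (X : 'I_N -> R).

Definition esym k : R := \sum_(S : {set 'I_N} | #|S| == k) \prod_(i in S) X i.

Definition esym_wt (p : pred 'I_N) (Q : pred {set 'I_N}) k : R :=
  \sum_(S : {set 'I_N} | Q S && (#|S| == k)) \prod_(y in S) (t ^+ p y * X y).

Local Notation avoiding x := (fun S : {set 'I_N} => x \notin S).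
Local Notation through x := (fun S : {set 'I_N} => x \in S).
Local Notation below x := (fun y : 'I_N => (y < x)%N).
Local Notation above x := (fun y : 'I_N => (x < y)%N).

Lemma esym_wt_split p x k :
  esym_wt p predT k = esym_wt p (avoiding x) k + esym_wt p (through x) k.
Proof.
rewrite /esym_wt (bigID (fun S : {set 'I_N} => x \in S)) addrC.
by congr (_ + _); apply: eq_bigl => S; rewrite andbC.
Qed.

Lemma eq_esym_wt_avoiding p1 p2 x k : {in predC1 x, p1 =1 p2} ->
  esym_wt p1 (avoiding x) k = esym_wt p2 (avoiding x) k.
Proof.
move=> p12; apply: eq_bigr => S /andP[xNS _]; apply: eq_bigr => y yS.
by rewrite p12 //; apply: contraNneq xNS => <-.
Qed.

Lemma esym_wt_through p x k :
  esym_wt p (through x) k.+1 = t ^+ p x * X x * esym_wt p (avoiding x) k.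
Proof.
rewrite /esym_wt big_setU1_mem mulr_sumr; apply: eq_big => [S | S /andP[xNS _]].
  by rewrite cardsU1; case: (x \in S).
by rewrite big_setU1.
Qed.

Lemma esym_wt_through0 p x : esym_wt p (through x) 0 = 0.
Proof.
by apply: big_pred0 => S; rewrite cards_eq0; case: eqP => [-> |]; rewrite ?inE ?andbF.
Qed.

Lemma esym_wt_through_eq (p1 p2 : pred 'I_N) x k : {in predC1 x, p1 =1 p2} ->
  t ^+ p2 x * esym_wt p1 (through x) k = t ^+ p1 x * esym_wt p2 (through x) k.
Proof.
move=> p12; case: k => [|k]; first by rewrite !esym_wt_through0 !mulr0.
by rewrite !esym_wt_through (eq_esym_wt_avoiding k p12); ring.
Qed.

Lemma esym_wt_const (c : bool) (p : pred 'I_N) k : p =1 (fun _ => c) ->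
  esym_wt p predT k = t ^+ (c * k) * esym k.
Proof.
move=> pc; rewrite /esym_wt /esym mulr_sumr; apply: eq_bigr => S /eqP Sk.
rewrite big_split /= (eq_bigr (fun _ => t ^+ c)) => [|y _]; last by rewrite pc.
by rewrite prodr_const Sk -exprM mulnC.
Qed.

Lemma esym_wt_below (x : 'I_N) a :
  esym_wt (below x.+1) predT a =
  esym_wt (below x) (avoiding x) a + t * esym_wt (below x) (through x) a.
Proof.
have below_succ : {in predC1 x, below x.+1 =1 below x}.
  by move=> y /negbTE yNx; rewrite /= ltnS leq_eqVlt (val_eqE y x) yNx.
rewrite (esym_wt_split _ x) (eq_esym_wt_avoiding a below_succ).
by have := esym_wt_through_eq a below_succ; rewrite /= ltnn ltnSn expr1 mul1r => ->.
Qed.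

Lemma esym_wt_above (x : 'I_N) b :
  esym_wt (fun y => (x <= y)%N) predT b =
  esym_wt (above x) (avoiding x) b + t * esym_wt (above x) (through x) b.
Proof.
have above_succ : {in predC1 x, above x =1 (fun y => (x <= y)%N)}.
  by move=> y /negbTE yNx; rewrite /= [RHS]leq_eqVlt (val_eqE x y) eq_sym yNx.
rewrite (esym_wt_split _ x) -(eq_esym_wt_avoiding b above_succ).
by have := esym_wt_through_eq b above_succ; rewrite /= ltnn leqnn expr1 mul1r => <-.
Qed.

Lemma esym_wt_telescope a b :
  (t - 1) * \sum_(x < N) (esym_wt (below x) (through x) a * esym_wt (above x) (avoiding x) b
                         - esym_wt (below x) (avoiding x) a * esym_wt (above x) (through x) b)
  = (t ^+ a - t ^+ b) * (esym a * esym b).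
Proof.
(* [f N] = t^a e_a e_b and [f 0] = t^b e_a e_b, while [f x.+1 - f x] only
   involves the colour sets containing [x]. *)
pose f k := esym_wt (below k) predT a * esym_wt (fun y => (k <= y)%N) predT b.
have step (x : 'I_N) : f x.+1 - f x =
    (t - 1) * (esym_wt (below x) (through x) a * esym_wt (above x) (avoiding x) b
             - esym_wt (below x) (avoiding x) a * esym_wt (above x) (through x) b).
  by rewrite /f esym_wt_below esym_wt_above !(esym_wt_split _ x); ring.
rewrite mulr_sumr; under eq_bigr do rewrite -step.
rewrite -(big_mkord xpredT (fun k => f k.+1 - f k)) telescope_sumr // /f.
rewrite (@esym_wt_const true (below N)) => [|y]; last exact: ltn_ord.
rewrite (@esym_wt_const false (fun y => N <= y)%N) => [|y]; last by rewrite leqNgt ltn_ord.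
rewrite (@esym_wt_const false (below 0)) // (@esym_wt_const true (fun y => 0 <= y)%N) //.
by rewrite !mul1n !mul0n expr0 !mul1r; ring.
Qed.

Lemma esym0 : esym 0 = 1.
Proof.
rewrite /esym (big_pred1 set0) ?big_set0 // => S.
by rewrite cards_eq0.
Qed.

Definition pointed_esym a b : R :=
  \sum_(x < N) X x * esym_wt (below x) (avoiding x) a * esym_wt (above x) (avoiding x) b.

Lemma pointed_esym_telescope a b :
  (t - 1) * (pointed_esym a b.+1 - pointed_esym a.+1 b) =
  (t ^+ a.+1 - t ^+ b.+1) * (esym a.+1 * esym b.+1).
Proof.
rewrite -esym_wt_telescope /pointed_esym -sumrB; congr (_ * _); apply: eq_bigr => x _.
by rewrite !esym_wt_through ltnn expr0 mul1r; ring.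
Qed.

Lemma pointed_esym_telescope0l b :
  (t - 1) * pointed_esym 0 b = (t ^+ b.+1 - 1) * esym b.+1.
Proof.
have := esym_wt_telescope 0 b.+1; rewrite expr0 esym0 mul1r => tele.
rewrite -[t ^+ _ - 1]opprB mulNr -tele -mulrN -sumrN; congr (_ * _); apply: eq_bigr => x _.
by rewrite esym_wt_through0 esym_wt_through ltnn expr0 mul1r; ring.
Qed.

Lemma pointed_esym_telescope0r a :
  (t - 1) * pointed_esym a 0 = (t ^+ a.+1 - 1) * esym a.+1.
Proof.
have := esym_wt_telescope a.+1 0; rewrite expr0 esym0 mulr1 /pointed_esym => <-.
congr (_ * _); apply: eq_bigr => x _.
by rewrite esym_wt_through0 esym_wt_through ltnn expr0 mul1r; ring.
Qed.

End Telescoping.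

Section ClosedForm.
Variables (R : idomainType) (t : R) (N : nat) (X : 'I_N -> R).
Hypothesis t_neq1 : t != 1.

Local Notation esym := (esym X).
Local Notation pointed_esym := (pointed_esym t X).

Definition esym_pair_sum m n : R :=
  \sum_(l < m.+1) t ^+ l * qnum t (n - 2 * l)%N * (esym (n - l)%N * esym l).

Let mul_tB1I : injective ( *%R (t - 1)).
Proof. by apply: mulfI; rewrite subr_eq0. Qed.

Lemma expr_qnum d : t ^+ d = 1 + (t - 1) * qnum t d.
Proof. by rewrite /qnum -subrX1 addrC subrK. Qed.

Lemma pointed_esym0l b : pointed_esym 0 b = qnum t b.+1 * esym b.+1.
Proof.
by apply: mul_tB1I; rewrite pointed_esym_telescope0l expr_qnum; ring.
Qed.

Lemma pointed_esym0r a : pointed_esym a 0 = qnum t a.+1 * esym a.+1.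
Proof.
by apply: mul_tB1I; rewrite pointed_esym_telescope0r expr_qnum; ring.
Qed.

Lemma pointed_esym_succl a b : (a <= b)%N ->
  pointed_esym a.+1 b =
  pointed_esym a b.+1 + t ^+ a.+1 * qnum t (b - a) * (esym b.+1 * esym a.+1).
Proof.
move=> ab; apply: mul_tB1I; have tele := pointed_esym_telescope t X a b.
have tb : t ^+ b.+1 = t ^+ a.+1 * (1 + (t - 1) * qnum t (b - a)).
  by rewrite -expr_qnum -exprD; congr (_ ^+ _); lia.
have -> : (t - 1) * pointed_esym a.+1 b = (t - 1) * pointed_esym a b.+1 -
    (t ^+ a.+1 - t ^+ b.+1) * (esym a.+1 * esym b.+1) by rewrite -tele; ring.
by rewrite tb; ring.
Qed.

Lemma pointed_esym_succr a b : (b <= a)%N ->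
  pointed_esym a b.+1 =
  pointed_esym a.+1 b + t ^+ b.+1 * qnum t (a - b) * (esym a.+1 * esym b.+1).
Proof.
move=> ba; apply: mul_tB1I; have tele := pointed_esym_telescope t X a b.
have ta : t ^+ a.+1 = t ^+ b.+1 * (1 + (t - 1) * qnum t (a - b)).
  by rewrite -expr_qnum -exprD; congr (_ ^+ _); lia.
have -> : (t - 1) * pointed_esym a b.+1 = (t - 1) * pointed_esym a.+1 b +
    (t ^+ a.+1 - t ^+ b.+1) * (esym a.+1 * esym b.+1) by rewrite -tele; ring.
by rewrite ta; ring.
Qed.

Lemma pointed_esym_le a b : (a <= b)%N -> pointed_esym a b = esym_pair_sum a (a + b).+1.
Proof.
elim: a b => [|a IH] b ab.
  by rewrite pointed_esym0l /esym_pair_sum big_ord1 expr0 muln0 !subn0 esym0 mul1r mulr1.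
rewrite (pointed_esym_succl (ltnW ab)) (IH _ (leqW (ltnW ab))) /esym_pair_sum.
rewrite [RHS]big_ord_recr /= addnS addSn; congr (_ + _ * qnum t _ * (esym _ * _)); lia.
Qed.

Lemma pointed_esym_ge a b : (b <= a)%N -> pointed_esym a b = esym_pair_sum b (a + b).+1.
Proof.
elim: b a => [|b IH] a ba.
  by rewrite pointed_esym0r /esym_pair_sum big_ord1 expr0 muln0 !subn0 addn0 esym0 mul1r mulr1.
rewrite (pointed_esym_succr (ltnW ba)) (IH _ (leqW (ltnW ba))) /esym_pair_sum.
rewrite [RHS]big_ord_recr /= addSn addnS; congr (_ + _ * qnum t _ * (esym _ * _)); lia.
Qed.

Lemma pointed_esym_closed a b : pointed_esym a b = esym_pair_sum (minn a b) (a + b).+1.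
Proof.
case: (leqP a b) => [ab | /ltnW ba].
  by rewrite pointed_esym_le // (minn_idPl ab).
by rewrite pointed_esym_ge // (minn_idPr ba).
Qed.

End ClosedForm.

Section TwoCliques.
Variables (a b N : nat).
Local Notation n := (a.+1 + b)%N.
Local Notation edge := (@nuio_edge n (m_cor n a.+1)).

Lemma npairs_nuio_cat (rc : rel 'I_N)
    (kL : {ffun 'I_a.+1 -> 'I_N}) (kB : {ffun 'I_b -> 'I_N}) :
  npairs edge rc (ffun_cat kL kB) =
  (npairs (@complete_edge a.+1) rc kL + \sum_(j < b) rc (kL ord_max) (kB j)
   + npairs (@complete_edge b) rc kB)%N.
Proof.
have edge_ll (i j : 'I_a.+1) : edge (lshift b i) (lshift b j) = (i < j)%N.
  by rewrite /nuio_edge /m_cor /=; apply/andb_idr => _; have := ltn_ord j; case: ifP; lia.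
have edge_lr (i : 'I_a.+1) (j : 'I_b) :
    edge (lshift b i) (rshift a.+1 j) = (i == a :> nat).
  rewrite /nuio_edge /m_cor /=; have := ltn_ord i; have := ltn_ord j.
  case: ifP => *; apply/idP/idP; lia.
have edge_rl (i : 'I_b) (j : 'I_a.+1) : edge (rshift a.+1 i) (lshift b j) = false.
  by rewrite /nuio_edge /= ltnNge (leq_trans (ltnW (ltn_ord j))) ?leq_addr.
have edge_rr (i j : 'I_b) : edge (rshift a.+1 i) (rshift a.+1 j) = (i < j)%N.
  rewrite /nuio_edge /m_cor /=; have := ltn_ord i; have := ltn_ord j.
  case: ifP => *; apply/idP/idP; lia.
rewrite /npairs; under eq_bigr => i _ do rewrite big_split_ord.
rewrite big_split_ord /= !big_split /=.
rewrite [X in (_ + (X + _))%N]big1 ?add0n; last first.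
  by move=> i _; apply: big1 => j _; rewrite edge_rl.
congr (_ + _ + _)%N.
- by apply: eq_bigr => i _; apply: eq_bigr => j _; rewrite edge_ll !ffun_cat_lshift.
- rewrite big_ord_recr /= big1 ?add0n => [|i _]; last first.
    by apply: big1 => j _; rewrite edge_lr /= ltn_eqF.
  by apply: eq_bigr => j _; rewrite edge_lr eqxx ffun_cat_lshift ffun_cat_rshift.
- by apply: eq_bigr => i _; apply: eq_bigr => j _; rewrite edge_rr !ffun_cat_rshift.
Qed.

Local Notation tX := (('X : tpoly)%:MP : {mpoly tpoly[N]}).

Lemma chromQS_nuio_cliques :
  chromQS N edge =
  \sum_(kL : {ffun 'I_a.+1 -> 'I_N} | Defs.proper (@complete_edge a.+1) kL)
     tX ^+ asc (@complete_edge a.+1) kL * \prod_(i < a.+1) 'X_(kL i)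
     * chrom_complete tX b [set~ kL ord_max] (fun y => tX ^+ (kL ord_max < y)%N * 'X_y).
Proof.
rewrite /chromQS big_ffun_cat [RHS]big_mkcond; apply: eq_bigr => kL _.
rewrite /chrom_complete mulr_sumr.
have proper_cat kB : Defs.proper edge (ffun_cat kL kB) =
    [&& Defs.proper (@complete_edge a.+1) kL, Defs.proper (@complete_edge b) kB
      & colors kB \subset [set~ kL ord_max]].
  rewrite !proper_npairs npairs_nuio_cat !addn_eq0 subsetC sub1set inE notin_colors.
  have -> : (\sum_(j < b) (kL ord_max == kB j) = \sum_(j < b) (kB j == kL ord_max))%N.
    by apply: eq_bigr => j _; rewrite eq_sym.
  by rewrite andbAC -andbA.
case: ifP => kLP; last by apply: big_pred0 => kB; rewrite proper_cat kLP.
apply: eq_big => [kB | kB _]; first by rewrite proper_cat kLP.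
rewrite asc_npairs npairs_nuio_cat -!asc_npairs rmorphXn /= !exprD big_split_ord /=.
rewrite (eq_bigr (fun i => 'X_(kL i))) => [|i _]; last by rewrite ffun_cat_lshift.
rewrite (eq_bigr (fun j => 'X_(kB j))) => [|j _]; last by rewrite ffun_cat_rshift.
by rewrite big_split /= prodrXr; ring.
Qed.

Lemma chromQS_pointed_esym :
  chromQS N edge = qfac tX a * qfac tX b * pointed_esym tX (fun i => 'X_i) a b.
Proof.
have avoidingE (x : 'I_N) (S : {set 'I_N}) : (S \subset [set~ x]) = (x \notin S).
  by rewrite subsetC sub1set inE.
rewrite chromQS_nuio_cliques; under eq_bigr do rewrite chrom_completeE.
rewrite (eq_bigl (fun kL => Defs.proper (@complete_edge a.+1) kL && (colors kL \subset setT)));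
  last by move=> kL; rewrite subsetT andbT.
rewrite (sum_chrom_complete_last tX a setT (fun y => 'X_y) (fun x => qfac tX b *
  \sum_(S : {set 'I_N} | (S \subset [set~ x]) && (#|S| == b))
     \prod_(y in S) (tX ^+ (x < y)%N * 'X_y))).
rewrite /pointed_esym mulr_sumr (eq_bigl xpredT) => [|x]; last by rewrite in_setT.
apply: eq_bigr => x _; rewrite chrom_completeE /esym_wt.
under [X in _ * (_ * X) = _]eq_bigl do rewrite subsetD1 subsetT.
under [X in _ * (_ * X) * _ = _]eq_bigl do rewrite avoidingE.
by ring.
Qed.

End TwoCliques.

Lemma mpolyC_qint N m : (qint m)%:MP = qnum (('X : tpoly)%:MP : {mpoly tpoly[N]}) m.
Proof. by rewrite /qint rmorph_sum; apply: eq_bigr => j _; rewrite rmorphXn. Qed.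

Lemma mpolyC_qfact N m : (qfact m)%:MP = qfac (('X : tpoly)%:MP : {mpoly tpoly[N]}) m.
Proof. by rewrite /qfact rmorph_prod; apply: eq_bigr => i _; apply: mpolyC_qint. Qed.

Theorem corollary4p4 (n r : nat) (Hr1 : (1 <= r)%N) (Hrn : (r <= n - 1)%N) (N : nat) :
  @chromQS n N (@nuio_edge n (m_cor n r)) =
  \sum_(l < (minn (n - r) (r - 1)).+1)
     ('X^l * qfact (n - r) * qfact (r - 1) * qint (n - 2 * l) : tpoly)%:MP
       * e2 N (n - l) l.
Proof.
case: r Hr1 Hrn => [//|a] _ Hrn.
have [b ->] : exists b, n = (a.+1 + b)%N by exists (n - a.+1)%N; lia.
have tX_neq1 : ('X : tpoly)%:MP != 1 :> {mpoly tpoly[N]}.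
  by rewrite -(rmorph1 (@mpolyC N tpoly)) mpolyC_eq -subr_eq0 -polyC1 polyXsubC_eq0.
rewrite chromQS_pointed_esym (pointed_esym_closed _ tX_neq1) /esym_pair_sum.
rewrite addKn subn1 /= minnC -addSn mulr_sumr; apply: eq_bigr => l _.
rewrite !rmorphM /= rmorphXn mpolyC_qint !mpolyC_qfact.
rewrite (_ : e2 N _ _ = esym (fun i => 'X_i) (a.+1 + b - l)%N * esym (fun i => 'X_i) l) //.
ring.
Qed.
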